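(* Let $I=[a,b]$ with $|I|<1$, $\gamma>0$, and $\mathcal{K}\in\mathrm{D}^{1+\mathcal{Z}_\gamma}(I)$. For $x\in I$ let $z=\frac{b-x}{b-a}$. Then there is a constant $C>0$ such that for all $x\in I$ $$|z\mathcal{K}'(a)+(1-z)\mathcal{K}'(b)-\mathcal{K}'(x)|\le\begin{cases}C|I|\,T_\gamma(z,|I|), & z\in[0,\frac12],\\ C|I|\,T_\gamma(1-z,|I|), & z\in(\frac12,1].\end{cases}$$
   Context: $\mathcal{Z}_\gamma(x)=(\log\frac1x)^{-\gamma}$ for $x\in(0,1)$, $\mathcal{Z}_\gamma(0)=0$. $\mathrm{D}^{1+\mathcal{Z}_\gamma}(I)$ is the class of $C^1$ diffeomorphisms $\mathcal{K}$ of $I$ onto its image whose derivative satisfies: there is $C_0>0$ with $|\mathcal{K}'(\xi+\tau)+\mathcal{K}'(\xi-\tau)-2\mathcal{K}'(\xi)|\le C_0\tau\mathcal{Z}_\gamma(\tau)$ for all $\tau\in[0,|I|/2]$ and all $\xi$ with $\xi\pm\tau\in I$. $T_\gamma:[0,\frac12]\times(0,1)\to\mathbb{R}$ is defined by $T_\gamma(s,t)=s\int_s^1\frac{\mathcal{Z}_\gamma(xt)}{x}dx+\int_0^s\mathcal{Z}_\gamma(xt)dx$ for $s\in(0,\frac12]$ and $T_\gamma(0,t)=0$. *)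

From Stdlib Require Import Reals.
From Coquelicot Require Import Coquelicot.
Open Scope R_scope.

(* Z_gamma(x) = (log (1/x))^(-gamma) for x in (0,1), Z_gamma(0) = 0.
   (Values outside [0,1) are irrelevant: they are never used.) *)
Definition Zg (gamma x : R) : R :=
  if Rle_dec x 0 then 0 else Rpower (ln (/ x)) (- gamma).

Definition Tg (gamma s t : R) : R :=
  if Rle_dec s 0 then 0
  else s * RInt (fun x => Zg gamma (x * t) / x) s 1
       + RInt (fun x => Zg gamma (x * t)) 0 s.

Definition has_deriv_on (a b : R) (K dK : R -> R) : Prop :=
  forall x, a <= x <= b ->
    filterlim (fun y => (K y - K x) / (y - x))
      (within (fun y => a <= y <= b /\ y <> x) (locally x)) (locally (dK x)).

Definition C1_diffeo_on (a b : R) (K dK : R -> R) : Prop :=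
  has_deriv_on a b K dK /\
  (forall x, a <= x <= b ->
     filterlim dK (within (fun y => a <= y <= b) (locally x)) (locally (dK x))) /\
  (forall x y, a <= x <= b -> a <= y <= b -> K x = K y -> x = y) /\
  (forall x, a <= x <= b -> dK x <> 0).

Definition in_D1Z (gamma a b : R) (K dK : R -> R) : Prop :=
  C1_diffeo_on a b K dK /\
  exists C0, 0 < C0 /\
    forall tau xi, 0 <= tau <= (b - a) / 2 ->
      a <= xi - tau -> xi + tau <= b ->
      Rabs (dK (xi + tau) + dK (xi - tau) - 2 * dK xi) <= C0 * tau * Zg gamma tau.

From Stdlib Require Import Reals Lra.
From Coquelicot Require Import Coquelicot.
Open Scope R_scope.

(* Rescaling [a,b] to [0,1], h z := K'(b - z|I|) minus the chord through K'(a), K'(b)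
   vanishes at 0 and 1 and its second differences at step t are at most
   w t := C0 t|I| Z(t|I|).  Since 2 h z = h (2z) + h 0 - (second difference), the
   excess |h| - B over a candidate bound B halves along z -> 2z (or 2z - 1) as soon as
   w z / 2 <= B z - B (2z) / 2; h being bounded, the excess is then <= 0.
   B = w (1/2) gives a global bound, and then B s = 4 C0 |I| s int_s^1 Z(x|I|)/x dx
   works because int_s^2s Z(x|I|)/x dx >= Z(s|I|)/2; finally s int_s^1 <= T(s,|I|).
   For z > 1/2 apply the same to z -> h (1 - z). *)

Lemma Zg_ge0 g y : 0 <= Zg g y.
Proof. unfold Zg, Rpower; destruct (Rle_dec y 0); [lra | left; apply exp_pos]. Qed.

Lemma Zg_exp_form g y : 0 < y -> Zg g y = exp (- g * ln (ln (/ y))).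
Proof. intros Hy; unfold Zg, Rpower; destruct (Rle_dec y 0); [lra | reflexivity]. Qed.

Lemma ln_inv_gt0 y : 0 < y < 1 -> 0 < ln (/ y).
Proof.
  intros Hy; rewrite <- ln_1; apply ln_increasing; [lra |].
  rewrite <- Rinv_1; apply Rinv_lt_contravar; lra.
Qed.

Lemma Zg_le_compat g y1 y2 : 0 <= g -> y1 <= y2 < 1 -> Zg g y1 <= Zg g y2.
Proof.
  intros Hg Hy.
  destruct (Rle_dec y1 0) as [Hy1 | Hy1].
  { unfold Zg at 1; destruct (Rle_dec y1 0); [apply Zg_ge0 | lra]. }
  rewrite !Zg_exp_form by lra.
  assert (ln (ln (/ y2)) <= ln (ln (/ y1))).
  { apply ln_le; [apply ln_inv_gt0; lra |].
    apply ln_le; [apply Rinv_0_lt_compat; lra | apply Rinv_le_contravar; lra]. }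
  destruct (Req_dec (- g * ln (ln (/ y1))) (- g * ln (ln (/ y2)))) as [-> | Hne];
    [lra | left; apply exp_increasing; nra].
Qed.

Lemma Zg_small g eps : 0 < g -> 0 < eps -> exists d, 0 < d < 1 /\ Zg g d < eps.
Proof.
  intros Hg Heps.
  (* d = exp (- exp (c / g)) gives Zg g d = exp (- c) *)
  set (c := 1 - ln eps).
  exists (exp (- exp (c / g))).
  assert (Hd : 0 < exp (- exp (c / g)) < 1).
  { split; [apply exp_pos |]. rewrite <- exp_0. apply exp_increasing.
    assert (0 < exp (c / g)) by apply exp_pos. lra. }
  split; [exact Hd |].
  rewrite Zg_exp_form by lra.
  rewrite exp_Ropp, Rinv_inv, !ln_exp.
  rewrite <- (exp_ln eps) by lra. apply exp_increasing.
  replace (- g * (c / g)) with (- c) by (field; lra). unfold c; lra.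
Qed.

Lemma continuous_Zg g y : 0 < g -> 0 <= y < 1 -> continuous (Zg g) y.
Proof.
  intros Hg Hy. destruct (Req_dec y 0) as [-> | Hy0].
  - apply filterlim_locally; intros eps.
    destruct (Zg_small g eps Hg (cond_pos eps)) as [d [Hd Hzd]].
    exists (mkposreal d (proj1 Hd)); intros x Hx.
    change (Rabs (x - 0) < d) in Hx. change (Rabs (Zg g x - Zg g 0) < eps).
    rewrite Rminus_0_r in Hx. apply Rabs_def2 in Hx.
    replace (Zg g 0) with 0 by (unfold Zg; destruct (Rle_dec 0 0); lra).
    rewrite Rminus_0_r, Rabs_pos_eq by apply Zg_ge0.
    apply Rle_lt_trans with (Zg g d); [apply Zg_le_compat |]; lra.
  - apply continuous_ext_loc with (fun x => exp (- g * ln (ln (/ x)))).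
    + exists (mkposreal y ltac:(lra)); intros x Hx.
      change (Rabs (x - y) < y) in Hx. apply Rabs_def2 in Hx.
      symmetry; apply Zg_exp_form; lra.
    + apply (@ex_derive_continuous R_AbsRing R_NormedModule). auto_derive.
      repeat split; try lra; [apply Rinv_0_lt_compat | apply ln_inv_gt0]; lra.
Qed.

Definition Zg_scaled_div (g L x : R) : R := Zg g (x * L) / x.

Definition Jg (g L s : R) : R := RInt (Zg_scaled_div g L) s 1.

Section Kernel.
Variables (g L : R).
Hypotheses (Hg : 0 < g) (HL : 0 < L < 1).

Lemma continuous_Zg_scaled x : 0 <= x <= 1 -> continuous (fun x => Zg g (x * L)) x.
Proof.
  intros Hx. apply (continuous_comp (fun x => x * L) (Zg g)).
  - apply (@ex_derive_continuous R_AbsRing R_NormedModule); auto_derive; exact I.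
  - apply continuous_Zg; [exact Hg | nra].
Qed.

Lemma continuous_Zg_scaled_div x : 0 < x <= 1 -> continuous (Zg_scaled_div g L) x.
Proof.
  intros Hx. apply (continuous_mult (fun x => Zg g (x * L)) Rinv).
  - apply continuous_Zg_scaled; lra.
  - apply (@ex_derive_continuous R_AbsRing R_NormedModule); auto_derive; lra.
Qed.

Lemma ex_RInt_Zg_scaled_div u v : 0 < u <= v -> v <= 1 -> ex_RInt (Zg_scaled_div g L) u v.
Proof.
  intros Huv Hv. apply (@ex_RInt_continuous R_CompleteNormedModule); intros x Hx.
  rewrite Rmin_left, Rmax_right in Hx by lra.
  apply continuous_Zg_scaled_div; lra.
Qed.

Lemma RInt_Zg_scaled_div_ge0 u v : 0 < u <= v -> v <= 1 -> 0 <= RInt (Zg_scaled_div g L) u v.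
Proof.
  intros Huv Hv. apply RInt_ge_0; [lra | now apply ex_RInt_Zg_scaled_div |].
  intros x Hx. apply Rmult_le_pos; [apply Zg_ge0 | left; apply Rinv_0_lt_compat; lra].
Qed.

Lemma Zg_scaled_le_RInt_double s : 0 < s <= 1 / 2 ->
  Zg g (s * L) / 2 <= RInt (Zg_scaled_div g L) s (2 * s).
Proof.
  intros Hs.
  apply Rle_trans with (RInt (fun _ => Zg g (s * L) / (2 * s)) s (2 * s)).
  { rewrite RInt_const. right; change (Zg g (s * L) / 2 = (2 * s - s) * (Zg g (s * L) / (2 * s))).
    field; lra. }
  apply RInt_le; [lra | apply ex_RInt_const | apply ex_RInt_Zg_scaled_div; lra |].
  intros x Hx. unfold Zg_scaled_div, Rdiv.
  apply Rmult_le_compat; [apply Zg_ge0 | left; apply Rinv_0_lt_compat; lra | |].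
  - apply Zg_le_compat; nra.
  - apply Rinv_le_contravar; lra.
Qed.

Lemma Jg_split s : 0 < s <= 1 / 2 ->
  Jg g L s = RInt (Zg_scaled_div g L) s (2 * s) + Jg g L (2 * s).
Proof.
  intros Hs. unfold Jg.
  now rewrite <- (RInt_Chasles (Zg_scaled_div g L) s (2 * s) 1)
    by (apply ex_RInt_Zg_scaled_div; lra).
Qed.

Lemma Jg_ge0 s : 0 < s <= 1 -> 0 <= Jg g L s.
Proof. intros Hs. apply RInt_Zg_scaled_div_ge0; lra. Qed.

Lemma Jg_ge s : 0 < s <= 1 / 2 -> Zg g (L / 2) / 2 <= Jg g L s.
Proof.
  intros Hs. unfold Jg.
  rewrite <- (RInt_Chasles (Zg_scaled_div g L) s (1 / 2) 1)
    by (apply ex_RInt_Zg_scaled_div; lra).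
  assert (Hhalf := Zg_scaled_le_RInt_double (1 / 2) ltac:(lra)).
  replace (2 * (1 / 2)) with 1 in Hhalf by field.
  replace (1 / 2 * L) with (L / 2) in Hhalf by field.
  assert (0 <= RInt (Zg_scaled_div g L) s (1 / 2)) by (apply RInt_Zg_scaled_div_ge0; lra).
  change (Zg g (L / 2) / 2 <=
          RInt (Zg_scaled_div g L) s (1 / 2) + RInt (Zg_scaled_div g L) (1 / 2) 1).
  lra.
Qed.

Lemma mul_Jg_le_Tg s : 0 <= s <= 1 / 2 -> s * Jg g L s <= Tg g s L.
Proof.
  intros Hs. unfold Tg. destruct (Rle_dec s 0) as [Hs0 | Hs0].
  { replace s with 0 by lra. lra. }
  enough (0 <= RInt (fun x => Zg g (x * L)) 0 s) by (unfold Jg, Zg_scaled_div; lra).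
  apply RInt_ge_0; [lra | | intros; apply Zg_ge0].
  apply (@ex_RInt_continuous R_CompleteNormedModule); intros x Hx.
  rewrite Rmin_left, Rmax_right in Hx by lra.
  apply continuous_Zg_scaled; lra.
Qed.

End Kernel.

Lemma le0_of_halving (D : R -> Prop) (e : R -> R) (M : R) :
  (forall z, D z -> e z <= M) ->
  (forall z, D z -> exists z', D z' /\ e z <= e z' / 2) ->
  forall z, D z -> e z <= 0.
Proof.
  intros HM Hstep.
  assert (Hn : forall n z, D z -> e z <= M * (/ 2) ^ n).
  { induction n as [| n IH]; intros z Hz; simpl.
    - rewrite Rmult_1_r; auto.
    - destruct (Hstep z Hz) as [z' [Hz' Hle]].
      specialize (IH z' Hz'). lra. }
  intros z Hz. apply Rnot_lt_le; intros Hpos.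
  assert (HM0 : 0 < M) by (specialize (Hn O z Hz); simpl in Hn; lra).
  destruct (pow_lt_1_zero (/ 2) ltac:(rewrite Rabs_pos_eq; lra) (e z / M))
    as [N HN]; [apply Rdiv_lt_0_compat; lra |].
  specialize (HN N (le_n N)). specialize (Hn N z Hz).
  rewrite Rabs_pos_eq in HN by (apply pow_le; lra).
  apply Rmult_lt_compat_l with (r := M) in HN; [| lra].
  replace (M * (e z / M)) with (e z) in HN by (field; lra). lra.
Qed.

Lemma Rabs_le_of_second_diff u v w E :
  Rabs (u + v - 2 * w) <= E -> Rabs w <= (Rabs u + Rabs v + E) / 2.
Proof.
  intros H. replace w with ((u + v - (u + v - 2 * w)) / 2) by field.
  unfold Rdiv; rewrite Rabs_mult, (Rabs_pos_eq (/ 2)) by lra.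
  assert (Rabs (u + v - (u + v - 2 * w)) <= Rabs u + Rabs v + Rabs (u + v - 2 * w)).
  { unfold Rminus. eapply Rle_trans; [apply Rabs_triang |].
    rewrite Rabs_Ropp. assert (Hp := Rabs_triang u v). lra. }
  lra.
Qed.

Section ZygmundOnUnitInterval.
Variables (g L C0 M : R) (h : R -> R).
Hypotheses (Hg : 0 < g) (HL : 0 < L < 1) (HC0 : 0 < C0).
Hypotheses (h0 : h 0 = 0) (h1 : h 1 = 0).
Hypothesis hM : forall z, 0 <= z <= 1 -> Rabs (h z) <= M.
Hypothesis h_second_diff : forall z t, 0 <= t -> 0 <= z - t -> z + t <= 1 ->
  Rabs (h (z + t) + h (z - t) - 2 * h z) <= C0 * (t * L) * Zg g (t * L).

Lemma modulus_le_half t : 0 <= t <= 1 / 2 ->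
  C0 * (t * L) * Zg g (t * L) <= C0 * (L / 2) * Zg g (L / 2).
Proof.
  intros Ht.
  assert (Zg g (t * L) <= Zg g (L / 2)) by (apply Zg_le_compat; nra).
  apply Rmult_le_compat; [| apply Zg_ge0 | | assumption].
  - apply Rmult_le_pos; nra.
  - apply Rmult_le_compat_l; nra.
Qed.

Lemma zygmund_le_double z : 0 <= z <= 1 / 2 ->
  Rabs (h z) <= (Rabs (h (2 * z)) + C0 * (z * L) * Zg g (z * L)) / 2.
Proof.
  intros Hz. assert (H := h_second_diff z z ltac:(lra) ltac:(lra) ltac:(lra)).
  replace (z + z) with (2 * z) in H by ring. replace (z - z) with 0 in H by ring.
  apply Rabs_le_of_second_diff in H. rewrite h0, Rabs_R0, Rplus_0_r in H. exact H.
Qed.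

Lemma zygmund_le_double_sub1 z : 1 / 2 <= z <= 1 ->
  Rabs (h z) <= (Rabs (h (2 * z - 1)) + C0 * ((1 - z) * L) * Zg g ((1 - z) * L)) / 2.
Proof.
  intros Hz. assert (H := h_second_diff z (1 - z) ltac:(lra) ltac:(lra) ltac:(lra)).
  replace (z + (1 - z)) with 1 in H by ring. replace (z - (1 - z)) with (2 * z - 1) in H by ring.
  apply Rabs_le_of_second_diff in H. rewrite h1, Rabs_R0, Rplus_0_l in H. exact H.
Qed.

Lemma zygmund_global_bound z : 0 <= z <= 1 -> Rabs (h z) <= C0 * (L / 2) * Zg g (L / 2).
Proof.
  set (G := C0 * (L / 2) * Zg g (L / 2)).
  assert (HG : 0 <= G) by (apply Rmult_le_pos; [apply Rmult_le_pos | apply Zg_ge0]; lra).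
  intros Hz. enough (Rabs (h z) - G <= 0) by lra. revert z Hz.
  apply (le0_of_halving _ _ M); [intros z Hz; specialize (hM z Hz); lra |].
  intros z Hz. destruct (Rle_dec z (1 / 2)) as [Hz2 | Hz2].
  - exists (2 * z). split; [lra |].
    assert (H := zygmund_le_double z ltac:(lra)).
    assert (Hmod := modulus_le_half z ltac:(lra)).
    fold G in Hmod. lra.
  - exists (2 * z - 1). split; [lra |].
    assert (H := zygmund_le_double_sub1 z ltac:(lra)).
    assert (Hmod := modulus_le_half (1 - z) ltac:(lra)).
    fold G in Hmod. lra.
Qed.

Lemma zygmund_local_bound s : 0 <= s <= 1 / 2 -> Rabs (h s) <= 4 * C0 * L * (s * Jg g L s).
Proof.
  set (Phi := fun s => 4 * C0 * L * (s * Jg g L s)).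
  assert (HPhi : forall s, 0 < s <= 1 / 2 -> 0 <= Phi s).
  { intros u Hu. unfold Phi. assert (0 <= Jg g L u) by (apply Jg_ge0; lra).
    apply Rmult_le_pos; [| apply Rmult_le_pos]; nra. }
  intros Hs. enough (Rabs (h s) - Phi s <= 0) by (unfold Phi in *; lra). revert s Hs.
  apply (le0_of_halving _ _ M).
  { intros s Hs. destruct (Req_dec s 0) as [-> | Hs0].
    - unfold Phi. specialize (hM 0 ltac:(lra)). rewrite h0, Rabs_R0 in *. lra.
    - specialize (hM s ltac:(lra)). specialize (HPhi s ltac:(lra)). lra. }
  intros s Hs.
  destruct (Rle_dec s (1 / 4)) as [Hs4 | Hs4]; [destruct (Req_dec s 0) as [-> | Hs0] |].
  - exists 0. split; [lra |]. unfold Phi. rewrite h0, Rabs_R0. lra.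
  - exists (2 * s). split; [lra |].
    assert (H := zygmund_le_double s ltac:(lra)).
    assert (Hint := Zg_scaled_le_RInt_double g L Hg HL s ltac:(lra)).
    assert (Hsplit := Jg_split g L Hg HL s ltac:(lra)).
    assert (0 <= Zg g (s * L)) by apply Zg_ge0.
    assert (C0 * (s * L) * Zg g (s * L) <=
            8 * (C0 * L * s) * RInt (Zg_scaled_div g L) s (2 * s)).
    { assert (0 <= C0 * L * s) by (apply Rmult_le_pos; nra). nra. }
    unfold Phi. rewrite Hsplit. lra.
  - exists s. split; [lra |].
    assert (H := zygmund_global_bound s ltac:(lra)).
    assert (HJ := Jg_ge g L Hg HL s ltac:(lra)).
    assert (C0 * (L / 2) * Zg g (L / 2) <= Phi s).
    { unfold Phi.
      apply Rle_trans with (4 * C0 * L * (1 / 4 * (Zg g (L / 2) / 2))); [right; field |].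
      assert (0 <= Zg g (L / 2)) by apply Zg_ge0.
      apply Rmult_le_compat_l; [nra |]. apply Rmult_le_compat; lra. }
    lra.
Qed.

End ZygmundOnUnitInterval.

Lemma zygmund_local_bound_reflect g L C0 M (h : R -> R) :
  0 < g -> 0 < L < 1 -> 0 < C0 -> h 0 = 0 -> h 1 = 0 ->
  (forall z, 0 <= z <= 1 -> Rabs (h z) <= M) ->
  (forall z t, 0 <= t -> 0 <= z - t -> z + t <= 1 ->
    Rabs (h (z + t) + h (z - t) - 2 * h z) <= C0 * (t * L) * Zg g (t * L)) ->
  forall s, 0 <= s <= 1 / 2 -> Rabs (h (1 - s)) <= 4 * C0 * L * (s * Jg g L s).
Proof.
  intros Hg HL HC0 h0 h1 hM hsd.
  apply (zygmund_local_bound g L C0 M (fun z => h (1 - z))); auto.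
  - now rewrite Rminus_0_r.
  - now rewrite Rminus_eq_0.
  - intros z Hz; apply hM; lra.
  - intros z t Ht H1 H2.
    replace (1 - (z + t)) with (1 - z - t) by ring.
    replace (1 - (z - t)) with (1 - z + t) by ring.
    rewrite (Rplus_comm (h (1 - z - t))). apply hsd; lra.
Qed.

Definition clamp (a b y : R) : R := Rmax a (Rmin b y).

Lemma filterlim_clamp_within a b x : a <= x <= b ->
  filterlim (clamp a b) (locally x) (within (fun y => a <= y <= b) (locally x)).
Proof.
  intros Hx P [eps HP]. exists eps; intros y Hy.
  change (Rabs (y - x) < eps) in Hy.
  apply HP; [change (Rabs (clamp a b y - x) < eps) |];
    unfold clamp, Rmax, Rmin, Rabs in *; repeat destruct Rle_dec; repeat destruct Rcase_abs; lra.
Qed.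

Lemma bounded_of_continuous_within a b (f : R -> R) :
  (forall x, a <= x <= b ->
     filterlim f (within (fun y => a <= y <= b) (locally x)) (locally (f x))) ->
  exists M, forall x, a <= x <= b -> Rabs (f x) <= M.
Proof.
  intros Hf.
  assert (Hclamp : forall x, a <= x <= b -> clamp a b x = x).
  { intros x Hx. unfold clamp, Rmax, Rmin; repeat destruct Rle_dec; lra. }
  destruct (bounded_continuity (K := R_AbsRing) (V := R_NormedModule)
              (fun y => f (clamp a b y)) a b) as [M HM].
  - intros x Hx. rewrite Hclamp by exact Hx.
    eapply filterlim_comp; [apply filterlim_clamp_within, Hx | apply Hf, Hx].
  - exists M; intros x Hx. specialize (HM x Hx). rewrite Hclamp in HM by exact Hx.
    left; exact HM.
Qed.

Definition chord_defect (a b : R) (f : R -> R) (z : R) : R :=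
  f (b - z * (b - a)) - z * f a - (1 - z) * f b.

Section ChordDefect.
Variables (a b : R) (f : R -> R).
Hypothesis Hab : a < b.

Lemma chord_defect_0 : chord_defect a b f 0 = 0.
Proof. unfold chord_defect. replace (b - 0 * (b - a)) with b by ring. ring. Qed.

Lemma chord_defect_1 : chord_defect a b f 1 = 0.
Proof. unfold chord_defect. replace (b - 1 * (b - a)) with a by ring. ring. Qed.

Lemma chord_defect_at x :
  chord_defect a b f ((b - x) / (b - a)) =
  f x - ((b - x) / (b - a) * f a + (1 - (b - x) / (b - a)) * f b).
Proof.
  unfold chord_defect. replace (b - (b - x) / (b - a) * (b - a)) with x by (field; lra). ring.
Qed.

Lemma chord_defect_bounded M : (forall x, a <= x <= b -> Rabs (f x) <= M) ->
  forall z, 0 <= z <= 1 -> Rabs (chord_defect a b f z) <= 3 * M.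
Proof.
  intros HM z Hz. unfold chord_defect.
  assert (Hx := HM (b - z * (b - a)) ltac:(split; nra)).
  assert (Ha := HM a ltac:(lra)). assert (Hb := HM b ltac:(lra)).
  assert (Hza : Rabs (z * f a) <= M).
  { rewrite Rabs_mult, Rabs_pos_eq by lra. assert (0 <= Rabs (f a)) by apply Rabs_pos. nra. }
  assert (Hzb : Rabs ((1 - z) * f b) <= M).
  { rewrite Rabs_mult, Rabs_pos_eq by lra. assert (0 <= Rabs (f b)) by apply Rabs_pos. nra. }
  revert Hx Hza Hzb. unfold Rabs; repeat destruct Rcase_abs; lra.
Qed.

Lemma chord_defect_second_diff g C0 :
  (forall tau xi, 0 <= tau <= (b - a) / 2 -> a <= xi - tau -> xi + tau <= b ->
     Rabs (f (xi + tau) + f (xi - tau) - 2 * f xi) <= C0 * tau * Zg g tau) ->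
  forall z t, 0 <= t -> 0 <= z - t -> z + t <= 1 ->
    Rabs (chord_defect a b f (z + t) + chord_defect a b f (z - t) - 2 * chord_defect a b f z)
      <= C0 * (t * (b - a)) * Zg g (t * (b - a)).
Proof.
  intros Hf z t Ht H1 H2.
  set (xi := b - z * (b - a)).
  replace (chord_defect a b f (z + t) + chord_defect a b f (z - t) - 2 * chord_defect a b f z)
    with (f (xi + t * (b - a)) + f (xi - t * (b - a)) - 2 * f xi).
  - apply Hf; unfold xi; try split; nra.
  - unfold chord_defect, xi.
    replace (b - (z + t) * (b - a)) with (b - z * (b - a) - t * (b - a)) by ring.
    replace (b - (z - t) * (b - a)) with (b - z * (b - a) + t * (b - a)) by ring.
    ring.
Qed.

End ChordDefect.

Theorem lemma2p7 (a b gamma : R) (K dK : R -> R) :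
  a < b -> b - a < 1 -> 0 < gamma ->
  in_D1Z gamma a b K dK ->
  exists C, 0 < C /\
    forall x, a <= x <= b ->
      let z := (b - x) / (b - a) in
      Rabs (z * dK a + (1 - z) * dK b - dK x) <=
        (if Rle_dec z (1 / 2)
         then C * (b - a) * Tg gamma z (b - a)
         else C * (b - a) * Tg gamma (1 - z) (b - a)).
Proof.
  intros Hab HL1 Hg [[_ [Hcont _]] [C0 [HC0 Hzyg]]].
  destruct (bounded_of_continuous_within a b dK Hcont) as [M HM].
  assert (HL : 0 < b - a < 1) by lra.
  assert (Hh := chord_defect_second_diff a b dK Hab gamma C0 Hzyg).
  assert (HhM := chord_defect_bounded a b dK Hab M HM).
  exists (4 * C0); split; [lra |]. intros x Hx z.
  assert (Hz : 0 <= z <= 1).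
  { unfold z; split; [apply Rdiv_le_0_compat; lra |].
    apply Rmult_le_reg_r with (b - a); [lra |]. unfold Rdiv; rewrite Rmult_assoc, Rinv_l; lra. }
  replace (z * dK a + (1 - z) * dK b - dK x) with (- chord_defect a b dK z)
    by (unfold z; rewrite (chord_defect_at a b dK Hab x); ring).
  rewrite Rabs_Ropp.
  assert (H4 : 0 <= 4 * C0 * (b - a)) by nra.
  destruct (Rle_dec z (1 / 2)) as [Hz2 | Hz2].
  - eapply Rle_trans; [apply (zygmund_local_bound gamma (b - a) C0 (3 * M)) |]; auto; try lra.
    + apply chord_defect_0.
    + apply chord_defect_1.
    + apply Rmult_le_compat_l; [exact H4 | apply mul_Jg_le_Tg; lra].
  - replace z with (1 - (1 - z)) at 1 by ring.
    eapply Rle_trans; [apply (zygmund_local_bound_reflect gamma (b - a) C0 (3 * M)) |];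
      auto; try lra.
    + apply chord_defect_0.
    + apply chord_defect_1.
    + apply Rmult_le_compat_l; [exact H4 | apply mul_Jg_le_Tg; lra].
Qed.
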